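(* Let $\mathcal{X}=\{x_1,\dots,x_M\}$ and $\mathcal{Y}=\{y_1,\dots,y_N\}$ be finite sets (in this fixed enumeration), let $p(x)$ be a probability distribution on $\mathcal{X}$, and let $c:\mathcal{X}\times\mathcal{Y}\to[0,\infty]$ be a cost function that is staircase nondecreasing, i.e. (i) for all $1\le i<j\le M$ and all $y\in\mathcal{Y}$, if $c(x_i,y)=\infty$ then $c(x_j,y)=\infty$; and (ii) for all $1\le i<j\le N$ and all $x\in\mathcal{X}$, if $c(x,y_i)<\infty$ then $c(x,y_i)\le c(x,y_j)<\infty$. Assume that at least one protection scheme (defined below) exists. Then: 1. For every $\alpha>0$, $$\min_{(\mathscr{L},\mathscr{C})\in S}\ \mathscr{C}+\alpha\mathscr{L} \;=\; \min_{(\mathscr{L},\mathscr{C})\in S_d}\ \mathscr{C}+\alpha\mathscr{L}.$$ 2. For every $L\ge 1$, the pair $(L,C^*(L))$ is achieved by $\mathbf{P}=\lambda\mathbf{P}_1+(1-\lambda)\mathbf{P}_2$ for some $\lambda\in[0,1]$ and some deterministic protection schemes $\mathbf{P}_1,\mathbf{P}_2$, such that $\mathscr{L}(\mathbf{P})\le L$ and $C^*(L)\le \lambda\, C^*_d(\mathscr{L}(\mathbf{P}_1))+(1-\lambda)\,C^*_d(\mathscr{L}(\mathbf{P}_2))$.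
   Context: For any $M\times N$ matrix $\mathbf{A}=\{a_{xy}\}$ (rows indexed by $\mathcal{X}$, columns by $\mathcal{Y}$), the total cost is $\mathscr{C}(\mathbf{A})=\sum_{x,y}p(x)c(x,y)a_{xy}$ (with the convention $0\cdot\infty=0$), and the exponentiated maximal leakage (exp-leak) is $\mathscr{L}(\mathbf{A})=\sum_{y}\max_{x}a_{xy}$. A protection scheme is an $M\times N$ matrix $\mathbf{P}=\{p_{xy}\}$ with nonnegative entries, each row summing to $1$ (interpreted as $p_{xy}=\Pr(Y=y\mid X=x)$), and with $\mathscr{C}(\mathbf{P})<\infty$. It is deterministic if every entry is $0$ or $1$. A pair $(L,C)$ is achieved by $\mathbf{P}$ if $\mathscr{L}(\mathbf{P})\le L$ and $\mathscr{C}(\mathbf{P})\le C$. $S$ is the set of all pairs $(L,C)$ achieved by some protection scheme, and $S_d$ the set of all pairs achieved by some deterministic protection scheme. $C^*(L)=\inf\{C:(L,C)\in S\}$ and $C^*_d(L)=\inf\{C:(L,C)\in S_d\}$. *)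

From HB Require Import structures.
From mathcomp Require Import all_boot all_order all_algebra.
From mathcomp Require Import all_classical all_reals.
From mathcomp Require Import ereal.
Set Implicit Arguments. Unset Strict Implicit. Unset Printing Implicit Defensive.
Import Order.TTheory GRing.Theory Num.Theory.
Local Open Scope ring_scope.

Section Defs.
Variables (R : realType) (M N : nat).

(* x_i is the ordinal i : 'I_M, y_j is j : 'I_N (0-based enumeration). *)

Definition is_distribution (p : 'I_M -> R) : Prop :=
  (forall x, 0 <= p x) /\ \sum_(x < M) p x = 1.

Definition staircase_nondecreasing (c : 'I_M -> 'I_N -> \bar R) : Prop :=
  (forall (i j : 'I_M) (y : 'I_N), (i < j)%N -> c i y = +oo%E -> c j y = +oo%E) /\
  (forall (i j : 'I_N) (x : 'I_M), (i < j)%N -> (c x i < +oo)%E ->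
      (c x i <= c x j)%E /\ (c x j < +oo)%E).

(* total cost: sum_{x,y} p(x) c(x,y) a_xy, with 0 * oo = 0 (as in mule) *)
Definition cost (p : 'I_M -> R) (c : 'I_M -> 'I_N -> \bar R) (A : 'M[R]_(M, N))
  : \bar R :=
  (\sum_(x < M) \sum_(y < N) ((p x * A x y)%:E * c x y))%E.

(* exp-leak: sum_y max_x a_xy (for matrices with nonnegative entries the
   max over the nonempty set X coincides with \big[max/0]) *)
Definition leak (A : 'M[R]_(M, N)) : R :=
  \sum_(y < N) \big[Num.max/0]_(x < M) A x y.

Definition is_scheme (p : 'I_M -> R) (c : 'I_M -> 'I_N -> \bar R)
  (P : 'M[R]_(M, N)) : Prop :=
  (forall x y, 0 <= P x y) /\ (forall x, \sum_(y < N) P x y = 1) /\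
  (cost p c P < +oo)%E.

Definition deterministic (P : 'M[R]_(M, N)) : Prop :=
  forall x y, P x y = 0 \/ P x y = 1.

Definition achieves p c (P : 'M[R]_(M, N)) (L C : R) : Prop :=
  leak P <= L /\ (cost p c P <= C%:E)%E.

Definition S p c : set (R * R) :=
  [set LC | exists P, is_scheme p c P /\ achieves p c P LC.1 LC.2].

Definition S_d p c : set (R * R) :=
  [set LC | exists P, is_scheme p c P /\ deterministic P /\ achieves p c P LC.1 LC.2].

Definition Cstar p c (L : R) : R := inf [set C | S p c (L, C)].
Definition Cstar_d p c (L : R) : R := inf [set C | S_d p c (L, C)].

(* "min_{(L,C) in T} C + alpha L = v": the minimum exists and equals v *)
Definition is_min_obj (T : set (R * R)) (alpha v : R) : Prop :=
  (exists LC, T LC /\ LC.2 + alpha * LC.1 = v) /\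
  (forall LC, T LC -> v <= LC.2 + alpha * LC.1).

End Defs.

(* Lay the columns y of a randomized scheme P side by side on the half-line, column y
   being the interval [S y, S y.+1) of length max_x P(x,y); the total length is the
   leak L of P.  For u in [0,1), send row x to the column containing the first point
   of u + Z at or after S (f x), where f x is the first column used by row x.  This
   deterministic scheme D_u uses only columns that contain a point of u + Z, so its
   leak is at most floor L + [u < frac L].  For u uniform on [0,1), the image of row x
   is distributed like a left-shifted P(x,.), so Abel summation and the staircase
   monotonicity of the costs give E[cost D_u] <= cost P.  Averaging separately over
   u < frac L and u >= frac L yields deterministic D1, D2 with leaks at most
   floor L + 1 and floor L such that frac L * cost D1 + (1 - frac L) * cost D2 <=
   cost P; both statements follow by comparing an arbitrary scheme with these two
   roundings.  Only finitely many values of u matter, so the uniform average is taken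
   over a finite grid. *)

From HB Require Import structures.
From mathcomp Require Import all_boot all_order all_algebra.
From mathcomp Require Import all_classical all_reals.
From mathcomp Require Import ereal.
From mathcomp Require Import ring lra zify.
Import Order.TTheory GRing.Theory Num.Theory.
Local Open Scope ring_scope.
Set Implicit Arguments. Unset Strict Implicit. Unset Printing Implicit Defensive.

Section FracCeil.
Variable R : archiRealFieldType.
Implicit Types a b u : R.

Definition frac b : R := b - (Num.floor b)%:~R.

Lemma floorD_frac b : (Num.floor b)%:~R + frac b = b.
Proof. by rewrite /frac addrC subrK. Qed.

Lemma frac_ge0 b : 0 <= frac b.
Proof. by rewrite subr_ge0 floor_le. Qed.

Lemma frac_lt1 b : frac b < 1.
Proof. by have := floorD1_gt b; rewrite /frac intrD; lra. Qed.

Lemma ceil_subr_frac b u : 0 <= u < 1 ->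
  (Num.ceil (b - u))%:~R = (Num.floor b)%:~R + ((u < frac b)%R : nat)%:R :> R.
Proof.
move=> /andP[u0 u1]; have hb0 := floor_le b; have := floorD1_gt b; rewrite intrD => hb1.
case: ltP => /= [ub|bu].
  rewrite /frac in ub.
  have -> : Num.ceil (b - u) = Num.floor b + 1.
    by apply: ceil_def; rewrite addrK intrD; apply/andP; split; lra.
  by rewrite intrD.
rewrite /frac in bu; have -> : Num.ceil (b - u) = Num.floor b.
  by apply: ceil_def; rewrite intrB; apply/andP; split; lra.
by rewrite addr0.
Qed.

(* [hits u a b] counts the points of [u + Z] lying in [a, b). *)
Definition hits u a b : int := Num.ceil (b - u) - Num.ceil (a - u).

Lemma hitsxx u a : hits u a a = 0.
Proof. exact: subrr. Qed.

Lemma hits_cat u a b c : hits u a b + hits u b c = hits u a c.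
Proof. by rewrite /hits addrC addrA subrK. Qed.

Lemma le_hits u a b b' : b <= b' -> hits u a b <= hits u a b'.
Proof. by move=> hb; rewrite lerD2r le_ceil // lerD2r. Qed.

Lemma hits_ge0 u a b : a <= b -> 0 <= hits u a b.
Proof. by move=> hab; rewrite -(hitsxx u a) le_hits. Qed.

Lemma hits_gt0 u a b : 1 <= b - a -> 0 < hits u a b.
Proof.
move=> hab; have := ceilB1_lt (a - u); rewrite intrB => ha.
rewrite subr_gt0 ceil_gt_int; lra.
Qed.

Lemma hits_le1 u a b : b - a < 1 -> hits u a b <= 1.
Proof.
move=> hab; have := ceil_ge (a - u) => ha.
rewrite lerBlDr addrC ceil_le_int intrD; lra.
Qed.

End FracCeil.

Lemma uniform_grid (R : realFieldType) (phis : seq R) :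
  {in phis, forall phi, 0 <= phi <= 1} ->
  exists m (u w : 'I_m -> R),
    [/\ forall i, 0 <= u i < 1, forall i, 0 <= w i, \sum_i w i = 1 &
        {in phis, forall phi, \sum_(i | u i < phi) w i = phi}].
Proof.
(* The grid points are 0, the phis and 1, sorted; each point gets the gap to its successor. *)
move=> phis01; set s := sort <=%O (undup [:: 1, 0 & phis]).
have s_lt : sorted <%O s by rewrite sort_lt_sorted undup_uniq.
have mem_s v : (v \in s) = (v \in [:: 1, 0 & phis]) by rewrite mem_sort mem_undup.
set m := (size s).-1.
have size_s : size s = m.+1.
  have : 1 \in s by rewrite mem_s mem_head.
  by rewrite /m; case: (s) => // _ s' _.
pose t k := nth 0 s k.
have t_lt j k : (j <= m)%N -> (k <= m)%N -> (t j < t k) = (j < k)%N.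
  by move=> hj hk; rewrite (lt_sorted_ltn_nth 0 s_lt) // inE size_s ltnS.
have t01 k : (k <= m)%N -> 0 <= t k <= 1.
  move=> hk; have : t k \in s by rewrite mem_nth // size_s.
  by rewrite mem_s !inE => /orP[/eqP->|/orP[/eqP->|/phis01//]]; rewrite ?lexx ?ler01.
have t_index v : v \in [:: 1, 0 & phis] -> (index v s <= m)%N /\ t (index v s) = v.
  by move=> hv; rewrite -ltnS -size_s index_mem /t nth_index mem_s.
have t0 : t 0 = 0.
  have [hj tj] := t_index 0 ltac:(by rewrite !inE eqxx orbT).
  have := t_lt _ _ hj (leq0n m); rewrite ltn0 tj => /negbT; rewrite -leNgt => h0.
  by apply/eqP; rewrite eq_le h0; case/andP: (t01 0 (leq0n m)).
have tm : t m = 1.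
  have [hj tj] := t_index 1 (mem_head _ _).
  have := t_lt _ _ (leqnn m) hj; rewrite ltnNge hj tj => /negbT; rewrite -leNgt => h1.
  by apply/eqP; rewrite eq_le h1; case/andP: (t01 m (leqnn m)) => _ ->.
have sum_t j : (j <= m)%N -> \sum_(i < m | (i < j)%N) (t i.+1 - t i) = t j.
  move=> hj; rewrite -(big_ord_widen_cond _ xpredT (fun i => t i.+1 - t i) hj).
  by rewrite -(big_mkord xpredT (fun i => t i.+1 - t i)) telescope_sumr // t0 subr0.
exists m, (fun i => t i), (fun i => t i.+1 - t i); split.
- move=> i; have /andP[-> _] := t01 i (ltnW (ltn_ord i)).
  by rewrite -tm t_lt ?ltn_ord ?(ltnW (ltn_ord i)).
- by move=> i; rewrite subr_ge0 leNgt t_lt ?ltn_ord ?(ltnW (ltn_ord i)) //; lia.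
- by rewrite -tm -(sum_t m) //; apply: eq_bigl => i; rewrite ltn_ord.
move=> phi hphi; have [hj tj] := t_index phi ltac:(by rewrite !inE hphi !orbT).
rewrite -{2}tj -sum_t //; apply: eq_bigl => i.
by rewrite -{1}tj t_lt ?(ltnW (ltn_ord i)).
Qed.

Lemma abel_sum_le0 (R : realDomainType) (n : nat) (d c : nat -> R) :
  (forall k, (k <= n)%N -> 0 <= \sum_(i < k) d i) -> \sum_(i < n) d i = 0 ->
  (forall i, (i.+1 < n)%N -> c i <= c i.+1) ->
  \sum_(i < n) d i * c i <= 0.
Proof.
move=> d_ge0 d_sum0 c_mono.
have abel k : (k < n)%N -> \sum_(i < k.+1) d i * c i <= (\sum_(i < k.+1) d i) * c k.
  elim: k => [|k IHk] hk; first by rewrite !big_ord1.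
  rewrite big_ord_recr [X in _ <= X * _]big_ord_recr /= mulrDl lerD2r.
  apply: le_trans (IHk (ltnW hk)) _.
  by rewrite ler_wpM2l ?d_ge0 ?c_mono // ltnW.
case: n d_ge0 d_sum0 c_mono abel => [|k] _ d_sum0 _ abel; first by rewrite big_ord0.
by apply: le_trans (abel k (ltnSn k)) _; rewrite d_sum0 mul0r.
Qed.

Lemma split_sum_ge_argmin (R : realDomainType) (I : finType) (A : pred I)
    (w F : I -> R) (i0 : I) :
  ~~ A i0 -> (forall i, 0 <= w i) ->
  exists i1 i2, ~~ A i2 /\
    (\sum_(i | A i) w i) * F i1 + (\sum_(i | ~~ A i) w i) * F i2
      <= \sum_i w i * F i.
Proof.
move=> nA_i0 w_ge0.
have argmin_le (B : pred I) j : B j ->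
    exists2 k, B k & (\sum_(i | B i) w i) * F k <= \sum_(i | B i) w i * F i.
  move=> Bj; case: (arg_minP F Bj) => k Bk k_min; exists k => //.
  by rewrite mulr_suml; apply: ler_sum => i Bi; rewrite ler_wpM2l ?k_min.
have [i2 nA_i2 le2] := argmin_le (predC A) i0 nA_i0.
rewrite [\sum_i _](bigID A) /=; case: (pickP A) => [j Aj | noA].
  have [i1 A_i1 le1] := argmin_le A j Aj.
  by exists i1, i2; split => //; apply: lerD.
by exists i2, i2; rewrite !(big_pred0 _ _ _ _ noA) mul0r !add0r.
Qed.

Lemma grid_avg_ceil (R : archiRealFieldType) m (u w : 'I_m -> R) b :
  (forall i, 0 <= u i < 1) -> \sum_i w i = 1 ->
  \sum_(i | u i < frac b) w i = frac b ->
  \sum_i w i * (Num.ceil (b - u i))%:~R = b.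
Proof.
move=> u01 w_sum1 w_cdf.
under eq_bigr do rewrite ceil_subr_frac // mulrDr.
rewrite big_split /= -mulr_suml w_sum1 mul1r -[RHS]floorD_frac; congr (_ + _).
rewrite -[RHS]w_cdf [RHS]big_mkcond /=.
by apply: eq_bigr => i _; case: ifP; rewrite ?mulr1 ?mulr0.
Qed.

Lemma inf_attained (R : realType) (A : set R) x :
  A x -> (forall y, A y -> x <= y) -> inf A = x.
Proof.
move=> Ax x_lb; apply/eqP; rewrite eq_le lb_le_inf ?andbT //; last by exists x.
by apply: ge_inf => //; exists x.
Qed.

Section ColumnMaxima.
Variables (R : realType) (M N : nat).
Implicit Types Q : 'M[R]_(M, N).

Definition colmax Q y := \big[Num.max/0]_(x < M) Q x y.

Lemma colmax_ge0 Q y : 0 <= colmax Q y.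
Proof. by rewrite /colmax; elim/big_rec: _ => // x v _ hv; rewrite le_max hv orbT. Qed.

Lemma le_colmax Q x y : Q x y <= colmax Q y.
Proof. exact: (le_bigmax _ (fun x => Q x y) x). Qed.

Lemma leak_convex Q1 Q2 t : 0 <= t <= 1 ->
  leak (t *: Q1 + (1 - t) *: Q2) <= t * leak Q1 + (1 - t) * leak Q2.
Proof.
move=> /andP[t0 t1]; have t1' : 0 <= 1 - t by rewrite subr_ge0.
rewrite /leak !mulr_sumr -big_split /=; apply: ler_sum => y _.
apply: bigmax_le => [|x _]; first by rewrite addr_ge0 // mulr_ge0 // colmax_ge0.
by rewrite !mxE lerD // ler_wpM2l // le_colmax.
Qed.

Definition fun_mx (g : {ffun 'I_M -> 'I_N}) : 'M[R]_(M, N) :=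
  \matrix_(x, y) (g x == y)%:R.

Lemma fun_mx_rows g x : \sum_y fun_mx g x y = 1.
Proof.
rewrite (bigD1 (g x)) //= mxE eqxx big1 ?addr0 // => y /negPf.
by rewrite mxE eq_sym => ->.
Qed.

Lemma fun_mx_deterministic g : deterministic (fun_mx g).
Proof. by move=> x y; rewrite mxE; case: eqP; [right | left]. Qed.

Lemma deterministic_fun_mx Q :
  (forall x, \sum_y Q x y = 1) -> deterministic Q -> exists g, Q = fun_mx g.
Proof.
move=> rows det.
have /fin_all_exists [g hg] : forall x, exists y, Q x y = 1.
  move=> x; case: (pickP (fun y => Q x y == 1)) => [y /eqP|Qx_ne1]; first by exists y.
  have := rows x; rewrite big1 => [/eqP|y _]; first by rewrite eq_sym oner_eq0.
  by case: (det x y) => // Qxy; move: (Qx_ne1 y); rewrite /= Qxy eqxx.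
exists [ffun x => g x]; apply/matrixP => x y; rewrite !mxE ffunE.
case: eqP => [<- //|/eqP gxy]; case: (det x y) => // Qxy.
have : 1 + 1 <= \sum_y Q x y.
  rewrite (bigD1 (g x)) //= (bigD1 y) 1?eq_sym //= hg Qxy addrA lerDl.
  by apply: sumr_ge0 => z _; case: (det x z) => ->.
by rewrite rows; lra.
Qed.

End ColumnMaxima.


Section Schemes.
Variables (R : realType) (M N : nat) (p : 'I_M -> R) (c : 'I_M -> 'I_N.+1 -> \bar R).
Hypotheses (hp : is_distribution p) (hc0 : forall x y, (0 <= c x y)%E)
  (hc : staircase_nondecreasing c).
Implicit Types Q : 'M[R]_(M, N.+1).

(* [fine] maps [+oo] to [0]; such entries are only ever weighted by zero. *)
Definition fcost x y : R := fine (c x y).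
Definition row_cost Q x : R := \sum_y Q x y * fcost x y.
Definition rcost Q : R := \sum_x p x * row_cost Q x.

Definition finite_on_support Q :=
  forall x y, 0 < p x -> 0 < Q x y -> (c x y < +oo)%E.

Lemma p_ge0 x : 0 <= p x.
Proof. by case: hp. Qed.

Lemma fcostK x y : (c x y < +oo)%E -> (fcost x y)%:E = c x y.
Proof. by move=> cxy; rewrite fineK // ge0_fin_numE. Qed.

Lemma finite_cost_mono x (y y' : 'I_N.+1) :
  (y <= y')%N -> (c x y < +oo)%E -> (c x y' < +oo)%E.
Proof.
rewrite leq_eqVlt => /orP[/eqP/val_inj <- //|lt_yy' cxy].
by case: (hc.2 y y' x lt_yy' cxy).
Qed.

Lemma fcost_mono x (y y' : 'I_N.+1) :
  (y <= y')%N -> (c x y < +oo)%E -> fcost x y <= fcost x y'.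
Proof.
rewrite leq_eqVlt => /orP[/eqP/val_inj <- //|lt_yy' cxy].
by case: (hc.2 y y' x lt_yy' cxy) => le_c cxy'; rewrite -lee_fin !fcostK.
Qed.

Lemma cost_rcost Q : (forall x y, 0 <= Q x y) -> finite_on_support Q ->
  cost p c Q = (rcost Q)%:E.
Proof.
move=> Q_ge0 Qfin; rewrite /cost /rcost -sumEFin; apply: eq_bigr => x _.
rewrite /row_cost mulr_sumr -sumEFin; apply: eq_bigr => y _.
have [->|px_gt0] := eqVneq (p x) 0; first by rewrite !mul0r mul0e.
have [->|Qxy_gt0] := eqVneq (Q x y) 0; first by rewrite mul0r !mulr0 mul0e.
have cxy : (c x y < +oo)%E by apply: Qfin; rewrite lt_def ?px_gt0 ?Qxy_gt0 ?p_ge0 ?Q_ge0.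
by rewrite -fcostK // -EFinM mulrA.
Qed.

Lemma cost_finite_on_support Q : (forall x y, 0 <= Q x y) ->
  (cost p c Q < +oo)%E -> finite_on_support Q.
Proof.
move=> Q_ge0 costQ x y px_gt0 Qxy_gt0; rewrite ltey; apply/negP => /eqP cxy.
have ge0_neqNy (e : \bar R) : (0 <= e)%E -> e != -oo%E.
  by move=> e_ge0; rewrite gt_eqF // (lt_le_trans _ e_ge0) ?ltNy0.
have term_ge0 x' y' : (0 <= (p x' * Q x' y')%:E * c x' y')%E.
  by rewrite mule_ge0 // lee_fin mulr_ge0 // p_ge0.
move: costQ; rewrite /cost ltey => /negP; apply; apply/eqP/esum_eqyP.
  by move=> x' _; apply/ge0_neqNy/sume_ge0.
exists x; split; rewrite ?mem_index_enum //; apply/esum_eqyP.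
  by move=> y' _; apply/ge0_neqNy.
exists y; split; rewrite ?mem_index_enum // cxy mulry gtr0_sg ?mul1e //.
exact: mulr_gt0.
Qed.

Lemma scheme_finite_on_support Q : is_scheme p c Q -> finite_on_support Q.
Proof. by case=> Q_ge0 [_]; exact: cost_finite_on_support. Qed.

Lemma scheme_cost Q : is_scheme p c Q -> cost p c Q = (rcost Q)%:E.
Proof. by move=> hQ; apply: cost_rcost (scheme_finite_on_support hQ); case: hQ. Qed.

Lemma scheme_achieves Q L C :
  is_scheme p c Q -> achieves p c Q L C <-> leak Q <= L /\ rcost Q <= C.
Proof. by move=> hQ; rewrite /achieves scheme_cost // lee_fin. Qed.

Lemma is_schemeP Q : (forall x y, 0 <= Q x y) -> (forall x, \sum_y Q x y = 1) ->
  finite_on_support Q -> is_scheme p c Q.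
Proof. by move=> Q_ge0 rows Qfin; do 2!split => //; rewrite cost_rcost ?ltry. Qed.

Lemma scheme_row_gt0 Q x : is_scheme p c Q -> exists y, 0 < Q x y.
Proof.
case=> Q_ge0 [rows _]; case: (pickP (fun y => 0 < Q x y)) => [y|Qx0]; first by exists y.
have := rows x; rewrite big1 => [/eqP|y _]; first by rewrite eq_sym oner_eq0.
by apply/eqP; rewrite eq_le Q_ge0 andbT leNgt Qx0.
Qed.

Lemma row_cost_lin Q1 Q2 a b x :
  row_cost (a *: Q1 + b *: Q2) x = a * row_cost Q1 x + b * row_cost Q2 x.
Proof.
rewrite /row_cost !mulr_sumr -big_split /=; apply: eq_bigr => y _.
by rewrite !mxE; ring.
Qed.

Lemma rcost_lin Q1 Q2 a b : rcost (a *: Q1 + b *: Q2) = a * rcost Q1 + b * rcost Q2.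
Proof.
rewrite /rcost !mulr_sumr -big_split /=; apply: eq_bigr => x _.
by rewrite row_cost_lin; ring.
Qed.

Lemma scheme_mix Q1 Q2 t : is_scheme p c Q1 -> is_scheme p c Q2 -> 0 <= t <= 1 ->
  is_scheme p c (t *: Q1 + (1 - t) *: Q2).
Proof.
move=> hQ1 hQ2 /andP[t0 t1]; have t1' : 0 <= 1 - t by rewrite subr_ge0.
have [[Q1_ge0 [rows1 _]] [Q2_ge0 [rows2 _]]] := (hQ1, hQ2).
apply: is_schemeP => [x y|x|x y px_gt0].
- by rewrite !mxE addr_ge0 // mulr_ge0.
- under eq_bigr do rewrite !mxE.
  by rewrite big_split -!mulr_sumr /= rows1 rows2 !mulr1 subrKC.
rewrite !mxE => mix_gt0.
have [Q1_gt0|Q1_le0] := ltP 0 (Q1 x y); first exact: scheme_finite_on_support Q1_gt0.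
have [Q2_gt0|Q2_le0] := ltP 0 (Q2 x y); first exact: scheme_finite_on_support Q2_gt0.
have Q1_0 : Q1 x y = 0 by apply/eqP; rewrite eq_le Q1_le0 Q1_ge0.
have Q2_0 : Q2 x y = 0 by apply/eqP; rewrite eq_le Q2_le0 Q2_ge0.
by move: mix_gt0; rewrite Q1_0 Q2_0 !mulr0 addr0 ltxx.
Qed.

Lemma fun_mx_scheme g : (cost p c (fun_mx R g) < +oo)%E -> is_scheme p c (fun_mx R g).
Proof.
by move=> costg; split; [move=> x y; rewrite mxE ler0n | split; [exact: fun_mx_rows |]].
Qed.

Definition det_scheme Q := is_scheme p c Q /\ deterministic Q.

Definition last_col_map : {ffun 'I_M -> 'I_N.+1} := [ffun=> ord_max].

Lemma last_col_scheme : (exists Q, is_scheme p c Q) ->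
  is_scheme p c (fun_mx R last_col_map) /\ leak (fun_mx R last_col_map) <= 1.
Proof.
move=> [Q hQ]; split.
  apply: is_schemeP => [x y|x|x y px_gt0]; rewrite ?fun_mx_rows ?mxE ?ler0n //.
  rewrite ffunE; case: eqP => [<- _|]; last by rewrite ltxx.
  have [y0 Qxy0] := scheme_row_gt0 x hQ.
  by apply: finite_cost_mono (scheme_finite_on_support hQ px_gt0 Qxy0); rewrite -ltnS.
rewrite /leak (bigD1 ord_max) //= big1 => [|y y_ne]; last first.
  apply/eqP; rewrite eq_le colmax_ge0 andbT; apply: bigmax_le => // x _.
  by rewrite !mxE ffunE eq_sym (negPf y_ne).
by rewrite addr0; apply: bigmax_le => // x _; rewrite !mxE ffunE eqxx.
Qed.

Section Rounding.
Variable P : 'M[R]_(M, N.+1).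
Hypothesis hP : is_scheme p c P.

Definition cumul k := \sum_(y < N.+1 | (y < k)%N) colmax P y.

Lemma cumul_mono : {homo cumul : k k' / (k <= k')%N >-> k <= k'}.
Proof.
move=> k k' le_kk'; rewrite /cumul [leLHS]big_mkcond [leRHS]big_mkcond /=.
apply: ler_sum => y _; case: ifP => [lt_yk|_]; first by rewrite (leq_trans lt_yk le_kk').
by case: ifP => _; rewrite ?colmax_ge0.
Qed.

Lemma cumul0 : cumul 0 = 0.
Proof. exact: big_pred0. Qed.

Lemma cumul_last : cumul N.+1 = leak P.
Proof. by apply: eq_bigl => y; rewrite ltn_ord. Qed.

Lemma cumulB a b : (a <= b)%N ->
  cumul b - cumul a = \sum_(y < N.+1 | (a <= y < b)%N) colmax P y.
Proof.
move=> le_ab; rewrite /cumul [X in X - _](bigID (fun y : 'I_N.+1 => (y < a)%N)) /=.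
have -> : \sum_(y < N.+1 | ((y < b) && (y < a))%N) colmax P y =
          \sum_(y < N.+1 | (y < a)%N) colmax P y.
  apply: eq_bigl => y; case: (ltnP y a) => lt_ya; rewrite ?andbF ?andbT //.
  by rewrite (leq_trans lt_ya le_ab).
by rewrite addrC addrK; apply: eq_bigl => y; rewrite -leqNgt andbC.
Qed.

Definition first_pos x : 'I_N.+1 :=
  if [pick y | 0 < P x y] is Some y0 then [arg min_(y < y0 | 0 < P x y) (y : nat)]
  else ord0.

Lemma first_posP x :
  0 < P x (first_pos x) /\ forall y, 0 < P x y -> (first_pos x <= y)%N.
Proof.
rewrite /first_pos; case: pickP => [y0 Pxy0|none]; first by case: arg_minnP.
by have [y Pxy] := scheme_row_gt0 x hP; move: (none y); rewrite /= Pxy.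
Qed.

Lemma P_lt_first_pos x (y : 'I_N.+1) : (y < first_pos x)%N -> P x y = 0.
Proof.
move=> lt_y; apply/eqP; rewrite eq_le; case: hP => -> _; rewrite andbT leNgt.
by apply/negP => /(first_posP x).2; rewrite leqNgt lt_y.
Qed.

Lemma finite_from_first_pos x (y : 'I_N.+1) :
  0 < p x -> (first_pos x <= y)%N -> (c x y < +oo)%E.
Proof.
move=> px_gt0 le_y; apply: finite_cost_mono le_y _.
exact: scheme_finite_on_support hP _ _ px_gt0 (first_posP x).1.
Qed.

Lemma prefix_mass_le x k : (first_pos x <= k)%N ->
  \sum_(y < N.+1 | (y < k)%N) P x y <= cumul k - cumul (first_pos x).
Proof.
move=> le_k; rewrite cumulB // (bigID (fun y : 'I_N.+1 => (first_pos x <= y)%N)) /=.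
rewrite [X in _ + X]big1 ?addr0 => [|y /andP[_]]; last by rewrite -ltnNge => /P_lt_first_pos.
rewrite (eq_bigl (fun y : 'I_N.+1 => (first_pos x <= y < k)%N)) => [|y]; last first.
  by rewrite andbC.
by apply: ler_sum => y _; exact: le_colmax.
Qed.

Lemma P_row_sum x : \sum_(y < N.+1 | (y < N.+1)%N) P x y = 1.
Proof. by case: hP => _ [/(_ x) <- _]; apply: eq_bigl => y; rewrite ltn_ord. Qed.

Lemma first_pos_gap x : 1 <= leak P - cumul (first_pos x).
Proof. by rewrite -cumul_last -(P_row_sum x) prefix_mass_le // ltnW. Qed.

Definition reached u x k := (0 < hits u (cumul (first_pos x)) (cumul k))%R.

Lemma reached_mono u x k k' : (k <= k')%N -> reached u x k -> reached u x k'.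
Proof. by move=> le_kk' /lt_le_trans; apply; rewrite le_hits // cumul_mono. Qed.

Lemma reached_first_pos u x k : (k <= first_pos x)%N -> ~~ reached u x k.
Proof. by move=> le_k; rewrite -leNgt -(hitsxx u (cumul (first_pos x))) le_hits ?cumul_mono. Qed.

Lemma reached_last u x : reached u x N.+1.
Proof. by rewrite /reached hits_gt0 // cumul_last first_pos_gap. Qed.

(* Row [x] is sent to the column holding the first point of [u + Z] at or after
   [cumul (first_pos x)], the columns being the consecutive intervals
   [[cumul y, cumul y.+1)] of lengths [colmax P y]. *)
Definition round_mx u : 'M[R]_(M, N.+1) :=
  \matrix_(x, y) (reached u x y.+1 && ~~ reached u x y)%:R.

Lemma round_mxE u x (y : 'I_N.+1) :
  round_mx u x y = (reached u x y.+1)%:R - (reached u x y)%:R.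
Proof.
rewrite mxE; have [reached_y|] := boolP (reached u x y); last by rewrite andbT subr0.
by rewrite (reached_mono (leqnSn y) reached_y) subrr.
Qed.

Lemma round_mx_deterministic u : deterministic (round_mx u).
Proof. by move=> x y; rewrite mxE; case: andP; [right | left]. Qed.

Lemma round_mx_support u x (y : 'I_N.+1) : round_mx u x y != 0 -> (first_pos x <= y)%N.
Proof. by rewrite mxE; case: leqP => // lt_y; rewrite (negPf (reached_first_pos u lt_y)) eqxx. Qed.

Lemma round_mx_scheme u : is_scheme p c (round_mx u).
Proof.
apply: is_schemeP => [x y|x|x y px_gt0 /lt0r_neq0/round_mx_support]; last first.
- exact: finite_from_first_pos.
- under eq_bigr do rewrite round_mxE.
  rewrite -(big_mkord xpredT (fun k => (reached u x k.+1)%:R - (reached u x k)%:R)).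
  by rewrite telescope_sumr // reached_last (negPf (reached_first_pos u (leq0n _))) subr0.
- by rewrite mxE ler0n.
Qed.

Lemma colmax_round_mx u y :
  colmax (round_mx u) y <= (hits u (cumul y) (cumul y.+1))%:~R.
Proof.
have hits_ge0' : 0 <= hits u (cumul y) (cumul y.+1) by rewrite hits_ge0 ?cumul_mono.
apply: bigmax_le => [|x _]; first by rewrite ler0z.
rewrite mxE /reached; case: andP => [[hit_next /negP no_hit]|_]; last by rewrite ler0z.
rewrite ler1z; move: hit_next no_hit; rewrite -(hits_cat _ _ (cumul y)); lia.
Qed.

Lemma leak_round_mx u : 0 <= u < 1 ->
  leak (round_mx u) <= (Num.floor (leak P))%:~R + ((u < frac (leak P))%R : nat)%:R.
Proof.
move=> u01; rewrite -ceil_subr_frac // -cumul_last.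
apply: le_trans (ler_sum _ (fun y _ => colmax_round_mx u y)) _.
under eq_bigr do rewrite /hits intrB.
rewrite -(big_mkord xpredT
  (fun k => (Num.ceil (cumul k.+1 - u))%:~R - (Num.ceil (cumul k - u))%:~R)).
have ceilNu : Num.ceil (- u) = 0 by apply: ceil_def; case/andP: u01 => u0 u1; rewrite sub0r; lra.
by rewrite telescope_sumr // cumul0 sub0r ceilNu subr0.
Qed.

Section Average.
Variables (m : nat) (u w : 'I_m -> R).
Hypotheses (u01 : forall i, 0 <= u i < 1) (w_ge0 : forall i, 0 <= w i)
  (w_sum1 : \sum_i w i = 1)
  (w_cdf : forall k, (k <= N.+1)%N ->
     \sum_(i | u i < frac (cumul k)) w i = frac (cumul k)).

Lemma avg_hits a b : (a <= N.+1)%N -> (b <= N.+1)%N ->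
  \sum_i w i * (hits (u i) (cumul a) (cumul b))%:~R = cumul b - cumul a.
Proof.
move=> ha hb; under eq_bigr do rewrite /hits intrB mulrBr.
by rewrite sumrB !grid_avg_ceil ?w_cdf.
Qed.

Lemma avg_reached x k : (k <= N.+1)%N ->
  \sum_(y < N.+1 | (y < k)%N) P x y <= \sum_i w i * (reached (u i) x k)%:R.
Proof.
move=> hk; have [le_k|lt_k] := leqP k (first_pos x).
  rewrite big1 => [|y lt_yk]; last exact/P_lt_first_pos/(leq_trans lt_yk).
  by apply: sumr_ge0 => i _; rewrite mulr_ge0.
have [gap_ge1|gap_lt1] := lerP 1 (cumul k - cumul (first_pos x)).
  rewrite (eq_bigr w) => [|i _]; last by rewrite /reached hits_gt0 // mulr1.
  rewrite w_sum1; case: hP => P_ge0 [/(_ x) <- _].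
  by rewrite [leRHS](bigID (fun y : 'I_N.+1 => (y < k)%N)) /= lerDl sumr_ge0.
apply: le_trans (prefix_mass_le (ltnW lt_k)) _.
rewrite -avg_hits ?(leq_trans (ltnW (ltn_ord _))) //; apply: ler_sum => i _.
rewrite ler_wpM2l //; have := hits_le1 (u i) gap_lt1.
have := hits_ge0 (u i) (cumul_mono (ltnW lt_k)); rewrite /reached.
by case: (hits _ _ _) => [[|[|n]]|n] //=; rewrite ?ler0n.
Qed.

Lemma prefix_avg_round_mx x k : (k <= N.+1)%N ->
  \sum_(j < k) \sum_i w i * round_mx (u i) x (inord j) =
  \sum_i w i * (reached (u i) x k)%:R.
Proof.
move=> hk; rewrite exchange_big /=; apply: eq_bigr => i _; rewrite -mulr_sumr.
congr (_ * _); under eq_bigr => j _ do rewrite round_mxE inordK ?(leq_trans (ltn_ord j)) //.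
rewrite -(big_mkord xpredT (fun j => (reached (u i) x j.+1)%:R - (reached (u i) x j)%:R)).
by rewrite telescope_sumr // (negPf (reached_first_pos _ (leq0n _))) subr0.
Qed.

Lemma avg_row_cost x : 0 < p x ->
  \sum_i w i * row_cost (round_mx (u i)) x <= row_cost P x.
Proof.
move=> px_gt0; rewrite -subr_le0.
pose d j := \sum_i w i * round_mx (u i) x (inord j) - P x (inord j).
(* Costs are nondecreasing from [first_pos x] on, and [d] vanishes before it. *)
pose cost_from j := fcost x (inord (maxn j (first_pos x))).
have -> : \sum_i w i * row_cost (round_mx (u i)) x - row_cost P x =
          \sum_(j < N.+1) d j * cost_from j.
  rewrite /row_cost; under eq_bigr do rewrite mulr_sumr.
  rewrite exchange_big -sumrB; apply: eq_bigr => y _ /=.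
  rewrite /d /cost_from inord_val; under eq_bigr do rewrite mulrA.
  rewrite -mulr_suml -mulrBl.
  have [lt_y|le_y] := ltnP y (first_pos x); last by rewrite inord_val.
  rewrite P_lt_first_pos // big1 ?subr0 ?mul0r // => i _.
  apply/eqP; rewrite mulf_eq0; apply/orP; right; apply: contraLR lt_y.
  by rewrite -leqNgt => /round_mx_support.
have P_inord k : (k <= N.+1)%N ->
    \sum_(j < k) P x (inord j) = \sum_(y < N.+1 | (y < k)%N) P x y.
  move=> hk; rewrite (big_ord_widen N.+1 (fun j => P x (inord j)) hk).
  by apply: eq_bigr => y _; rewrite inord_val.
apply: abel_sum_le0 => [k hk||j hj].
- by rewrite sumrB prefix_avg_round_mx // P_inord // subr_ge0 avg_reached.
- rewrite sumrB prefix_avg_round_mx // P_inord // P_row_sum.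
  by under eq_bigr do rewrite reached_last mulr1; rewrite w_sum1 subrr.
have lt_max k : (k < N.+1)%N -> (maxn k (first_pos x) < N.+1)%N.
  by rewrite gtn_max ltn_ord andbT.
rewrite /cost_from; apply: fcost_mono; first by rewrite !inordK ?lt_max ?(ltnW hj) //; lia.
by apply: finite_from_first_pos; rewrite // inordK ?lt_max ?(ltnW hj) // leq_maxr.
Qed.

Lemma avg_rcost : \sum_i w i * rcost (round_mx (u i)) <= rcost P.
Proof.
rewrite /rcost; under eq_bigr do rewrite mulr_sumr.
rewrite exchange_big /=; apply: ler_sum => x _.
under eq_bigr do rewrite mulrCA; rewrite -mulr_sumr.
have [->|px_ne0] := eqVneq (p x) 0; first by rewrite !mul0r.
by rewrite ler_wpM2l ?p_ge0 // avg_row_cost // lt_def px_ne0 p_ge0.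
Qed.

End Average.

Lemma rounding : exists D1 D2,
  [/\ det_scheme D1, det_scheme D2,
      leak D1 <= (Num.floor (leak P))%:~R + 1, leak D2 <= (Num.floor (leak P))%:~R &
      frac (leak P) * rcost D1 + (1 - frac (leak P)) * rcost D2 <= rcost P].
Proof.
set lam := frac (leak P).
have grid01 : {in [seq frac (cumul k) | k <- iota 0 N.+2], forall phi, 0 <= phi <= 1}.
  by move=> _ /mapP[k _ ->]; rewrite frac_ge0 ltW ?frac_lt1.
have [m [u [w [u01 w_ge0 w_sum1 w_cdf]]]] := uniform_grid grid01.
have cdf k : (k <= N.+1)%N -> \sum_(i | u i < frac (cumul k)) w i = frac (cumul k).
  by move=> hk; apply: w_cdf; apply/mapP; exists k; rewrite ?mem_iota.
have mass_lt : \sum_(i | u i < lam) w i = lam by rewrite /lam -cumul_last cdf.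
have mass_ge : \sum_(i | ~~ (u i < lam)) w i = 1 - lam.
  by rewrite -w_sum1 [X in _ = X - _](bigID (fun i => u i < lam)) /= mass_lt addrAC subrr add0r.
have [i0 i0_ge] : exists i0, ~~ (u i0 < lam).
  case: (pickP (fun i => ~~ (u i < lam))) => [i|all_lt]; first by exists i.
  move: mass_ge; rewrite big_pred0 // => /eqP; rewrite eq_sym subr_eq0 => /eqP lam1.
  by have := frac_lt1 (leak P); rewrite -/lam -lam1 ltxx.
have [i1 [i2 [i2_ge mix_le]]] := @split_sum_ge_argmin _ _ (fun i => u i < lam) w
  (fun i => rcost (round_mx (u i))) i0 i0_ge w_ge0.
exists (round_mx (u i1)), (round_mx (u i2)); split.
- by split; [exact: round_mx_scheme | exact: round_mx_deterministic].
- by split; [exact: round_mx_scheme | exact: round_mx_deterministic].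
- by apply: le_trans (leak_round_mx (u01 i1)) _; rewrite lerD2l; case: (_ < _)%R.
- by apply: le_trans (leak_round_mx (u01 i2)) _; rewrite (negPf i2_ge) addr0.
by rewrite mass_lt mass_ge in mix_le; apply: le_trans mix_le (avg_rcost u01 w_ge0 w_sum1 cdf).
Qed.

End Rounding.

Lemma det_scheme_argmin (A : pred 'M[R]_(M, N.+1)) (F : 'M[R]_(M, N.+1) -> R) Q0 :
  det_scheme Q0 -> A Q0 ->
  exists Q, [/\ det_scheme Q, A Q & forall Q', det_scheme Q' -> A Q' -> F Q <= F Q'].
Proof.
have fun_mx_of Q : det_scheme Q -> exists g, Q = fun_mx R g.
  by case=> [[_ [rows _]] detQ]; exact: deterministic_fun_mx.
pose ok g := (cost p c (fun_mx R g) < +oo)%E && A (fun_mx R g).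
have okP Q g : det_scheme Q -> A Q -> Q = fun_mx R g -> ok g.
  by move=> [[_ [_ costQ]] _] AQ eQ; rewrite /ok -eQ costQ.
move=> detQ0 AQ0; have [g0 eQ0] := fun_mx_of Q0 detQ0.
case: (arg_minP (fun g => F (fun_mx R g)) (okP _ _ detQ0 AQ0 eQ0)) => g /andP[cost_g A_g] g_min.
exists (fun_mx R g); split => //.
  by split; [exact: fun_mx_scheme | exact: fun_mx_deterministic].
move=> Q' detQ' AQ'; have [g' eQ'] := fun_mx_of Q' detQ'.
by rewrite eQ'; apply/g_min/(okP _ _ detQ' AQ' eQ').
Qed.

Lemma min_objective_deterministic alpha : 0 < alpha -> (exists Q, is_scheme p c Q) ->
  exists v, is_min_obj (S p c) alpha v /\ is_min_obj (S_d p c) alpha v.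
Proof.
move=> alpha_gt0 hex; pose obj Q := rcost Q + alpha * leak Q.
have [last_scheme _] := last_col_scheme hex.
have det_last := conj last_scheme (fun_mx_deterministic R last_col_map).
have [D [[hD detD] _ D_min]] := @det_scheme_argmin predT obj _ det_last isT.
have obj_lb Q : is_scheme p c Q -> obj D <= obj Q.
  move=> hQ; have [D1 [D2 [detD1 detD2 leak1 leak2 mix]]] := rounding hQ.
  have obj1 := D_min D1 detD1 isT; have obj2 := D_min D2 detD2 isT.
  have := floorD_frac (leak Q); have := frac_ge0 (leak Q); have := frac_lt1 (leak Q).
  move: leak1 leak2 mix obj1 obj2; rewrite /obj.
  set lam := frac (leak Q); set n := (Num.floor (leak Q))%:~R.
  move=> leak1 leak2 mix obj1 obj2 lam_lt1 lam_ge0 leakQ.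
  have lam' : 0 <= 1 - lam by rewrite subr_ge0 ltW.
  have := ler_wpM2l lam_ge0 obj1; have := ler_wpM2l lam' obj2.
  have := ler_wpM2l (mulr_ge0 lam_ge0 (ltW alpha_gt0)) leak1.
  have := ler_wpM2l (mulr_ge0 lam' (ltW alpha_gt0)) leak2.
  nra.
have achD : achieves p c D (leak D) (rcost D) by apply/scheme_achieves.
exists (obj D); split; split.
- by exists (leak D, rcost D); split => //; exists D.
- move=> [L C] [Q [hQ /(scheme_achieves _ _ hQ) [/= leakQ costQ]]].
  by apply: le_trans (obj_lb Q hQ) _; rewrite lerD // ler_wpM2l // ltW.
- by exists (leak D, rcost D); split => //; exists D.
- move=> [L C] [Q [hQ [_ /(scheme_achieves _ _ hQ) [/= leakQ costQ]]]].
  by apply: le_trans (obj_lb Q hQ) _; rewrite lerD // ler_wpM2l // ltW.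
Qed.

Lemma Cstar_attained Q L : is_scheme p c Q -> leak Q <= L ->
  (forall Q', is_scheme p c Q' -> leak Q' <= L -> rcost Q <= rcost Q') ->
  Cstar p c L = rcost Q.
Proof.
move=> hQ leakQ Q_min; apply: inf_attained => [|C [Q' [hQ' /(scheme_achieves _ _ hQ') []]]].
  by exists Q; split => //; apply/scheme_achieves.
by move=> /= /(Q_min Q' hQ'); apply: le_trans.
Qed.

Lemma Cstar_d_attained Q L : det_scheme Q -> leak Q <= L ->
  (forall Q', det_scheme Q' -> leak Q' <= L -> rcost Q <= rcost Q') ->
  Cstar_d p c L = rcost Q.
Proof.
move=> [hQ detQ] leakQ Q_min.
apply: inf_attained => [|C [Q' [hQ' [detQ' /(scheme_achieves _ _ hQ') []]]]].
  by exists Q; do 2!split => //; apply/scheme_achieves.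
by move=> /= /(Q_min Q' (conj hQ' detQ')); apply: le_trans.
Qed.

Lemma rcost_ge_mix L P1 P2 Q :
  (forall D, det_scheme D -> leak D <= (Num.floor L)%:~R + 1 -> rcost P1 <= rcost D) ->
  (forall D, det_scheme D -> leak D <= (Num.floor L)%:~R -> rcost P2 <= rcost D) ->
  rcost P1 <= rcost P2 -> is_scheme p c Q -> leak Q <= L ->
  frac L * rcost P1 + (1 - frac L) * rcost P2 <= rcost Q.
Proof.
move=> P1_min P2_min le12 hQ leakQ.
have [D1 [D2 [detD1 detD2 leak1 leak2 mix]]] := rounding hQ.
have floor_le : Num.floor (leak Q) <= Num.floor L by rewrite le_floor.
have := floorD_frac L; have := floorD_frac (leak Q).
have := frac_ge0 (leak Q); have := frac_lt1 (leak Q); have := frac_ge0 L; have := frac_lt1 L.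
move: leak1 leak2 mix; set lam := frac (leak Q); set th := frac L.
move=> leak1 leak2 mix th_lt1 th_ge0 lam_lt1 lam_ge0 leakQE LE.
have lam' : 0 <= 1 - lam by rewrite subr_ge0 ltW.
have [eq_floor|ne_floor] := eqVneq (Num.floor (leak Q)) (Num.floor L).
  rewrite eq_floor in leak1 leak2 leakQE.
  have := ler_wpM2l lam_ge0 (P1_min D1 detD1 leak1).
  have := ler_wpM2l lam' (P2_min D2 detD2 leak2).
  have : 0 <= (th - lam) * (rcost P2 - rcost P1) by rewrite mulr_ge0 // subr_ge0; lra.
  nra.
have lt_floor : (Num.floor (leak Q))%:~R + 1 <= (Num.floor L)%:~R :> R.
  by rewrite -[1]/(1%:~R : R) -intrD ler_int lezD1 lt_neqAle ne_floor.
have := ler_wpM2l lam_ge0 (P2_min D1 detD1 (le_trans leak1 lt_floor)).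
have fl_le : (Num.floor (leak Q))%:~R <= (Num.floor L)%:~R :> R by rewrite ler_int.
have := ler_wpM2l lam' (P2_min D2 detD2 (le_trans leak2 fl_le)).
have : th * (rcost P1 - rcost P2) <= 0 by rewrite mulr_ge0_le0 // subr_le0.
nra.
Qed.

Lemma Cstar_mix_deterministic L : 1 <= L -> (exists Q, is_scheme p c Q) ->
  exists (lambda : R) (P1 P2 : 'M[R]_(M, N.+1)),
    0 <= lambda <= 1 /\
    is_scheme p c P1 /\ deterministic P1 /\
    is_scheme p c P2 /\ deterministic P2 /\
    let P := lambda *: P1 + (1 - lambda) *: P2 in
    is_scheme p c P /\ achieves p c P L (Cstar p c L) /\
    Cstar p c L <= lambda * Cstar_d p c (leak P1) + (1 - lambda) * Cstar_d p c (leak P2).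
Proof.
move=> L_ge1 hex; set n : R := (Num.floor L)%:~R; set th := frac L.
have n_ge1 : 1 <= n by rewrite /n ler1z floor_ge_int.
have [last_scheme leak_last] := last_col_scheme hex.
have det_last := conj last_scheme (fun_mx_deterministic R last_col_map).
have [P1 [detP1 leak1 P1_min]] := @det_scheme_argmin (fun Q => leak Q <= n + 1) rcost _
  det_last ltac:(rewrite /=; lra).
have [P2 [detP2 leak2 P2_min]] := @det_scheme_argmin (fun Q => leak Q <= n) rcost _
  det_last ltac:(rewrite /=; lra).
have le12 : rcost P1 <= rcost P2 by apply: P1_min detP2 _; rewrite /=; lra.
have th01 : 0 <= th <= 1 by rewrite frac_ge0 ltW ?frac_lt1.
have [[hP1 dP1] [hP2 dP2]] := (detP1, detP2).
exists th, P1, P2; split => //; do 4!(split; first by []).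
move=> P; have hP : is_scheme p c P := scheme_mix hP1 hP2 th01.
have rcostP : rcost P = th * rcost P1 + (1 - th) * rcost P2 := rcost_lin _ _ _ _.
have leakP : leak P <= L.
  apply: le_trans (leak_convex _ _ th01) _; have := floorD_frac L; rewrite -/n -/th.
  move: th01 leak1 leak2 => /andP[th0 th1] /= leak1 leak2.
  have th1' : 0 <= 1 - th by rewrite subr_ge0.
  have := ler_wpM2l th0 leak1; have := ler_wpM2l th1' leak2.
  nra.
have CstarE : Cstar p c L = rcost P.
  apply: Cstar_attained => // Q hQ leakQ; rewrite rcostP.
  exact: rcost_ge_mix P1_min P2_min le12 hQ leakQ.
do 2!split => //; first by rewrite CstarE; apply/(scheme_achieves _ _ hP).
have P1_opt Q : det_scheme Q -> leak Q <= leak P1 -> rcost P1 <= rcost Q.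
  by move=> detQ leakQ; apply: P1_min; rewrite //= (le_trans leakQ).
have P2_opt Q : det_scheme Q -> leak Q <= leak P2 -> rcost P2 <= rcost Q.
  by move=> detQ leakQ; apply: P2_min; rewrite //= (le_trans leakQ).
rewrite CstarE rcostP (Cstar_d_attained detP1 (lexx _) P1_opt).
by rewrite (Cstar_d_attained detP2 (lexx _) P2_opt).
Qed.

End Schemes.

Lemma scheme_has_columns (R : realType) M N (p : 'I_M -> R) c (P : 'M[R]_(M, N)) :
  is_distribution p -> is_scheme p c P -> (0 < N)%N.
Proof.
case: N P c => // P c [_ p_sum1] [_ [rows _]]; case: M p P c p_sum1 rows => [|M] p P c.
  by rewrite big_ord0 => /eqP; rewrite eq_sym oner_eq0.
by move=> _ /(_ ord0); rewrite big_ord0 => /eqP; rewrite eq_sym oner_eq0.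
Qed.

Theorem theorem1 (R : realType) (M N : nat) (p : 'I_M -> R)
  (c : 'I_M -> 'I_N -> \bar R)
  (hp : is_distribution p)
  (hc0 : forall x y, (0 <= c x y)%E)
  (hc : staircase_nondecreasing c)
  (hex : exists P : 'M[R]_(M, N), is_scheme p c P) :
  (forall alpha : R, 0 < alpha ->
     exists v : R, is_min_obj (S p c) alpha v /\ is_min_obj (S_d p c) alpha v) /\
  (forall L : R, 1 <= L ->
     exists (lambda : R) (P1 P2 : 'M[R]_(M, N)),
       0 <= lambda <= 1 /\
       is_scheme p c P1 /\ deterministic P1 /\
       is_scheme p c P2 /\ deterministic P2 /\
       let P := lambda *: P1 + (1 - lambda) *: P2 in
       is_scheme p c P /\ achieves p c P L (Cstar p c L) /\
       Cstar p c L <= lambda * Cstar_d p c (leak P1)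
                      + (1 - lambda) * Cstar_d p c (leak P2)).
Proof.
have [P hP] := hex; have := scheme_has_columns hp hP.
case: N c hc0 hc hex {P hP} => // N c hc0 hc hex _.
split => [alpha alpha_gt0 | L L_ge1].
  exact: min_objective_deterministic.
exact: Cstar_mix_deterministic.
Qed.
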